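(* Let $k\geqslant 5$. There exists a non-decreasing function $f:\mathbb{N}\to\mathbb{N}$ with $n\leqslant f(n)\leqslant R(K_n^{(k)})$ for all $n$, such that for all $c,C>0$ and any $n_0$, there is an $n>n_0$ such that $$R(H)\leqslant c f(n)\quad\text{or}\quad R(H)\geqslant C f(n)$$ for every $k$-graph $H$ on $n$ vertices.
   Context: A $k$-graph is a pair $H=(V,E)$ where every edge $e\in E$ is a $k$-element subset of the vertex set $V$. $K_n^{(k)}$ is the $k$-graph on $n$ vertices in which every $k$-element subset of vertices is an edge. For a $k$-graph $H$, the Ramsey number $R(H)$ is the smallest integer $N$ such that every red-blue colouring of the edges of $K_N^{(k)}$ contains a copy of $H$ all of whose edges have the same colour. *)

From mathcomp Require Import all_boot.
From Stdlib Require Import ClassicalEpsilon.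
From Stdlib Require Import Rdefinitions Raxioms.

Set Implicit Arguments.
Unset Strict Implicit.
Unset Printing Implicit Defensive.

(* A k-graph on the vertex set 'I_n is a set E of subsets of 'I_n, all of size k. *)
Definition uniform (k n : nat) (E : {set {set 'I_n}}) : bool :=
  [forall e in E, #|e| == k].

Definition complete_kgraph (k n : nat) : {set {set 'I_n}} :=
  [set e : {set 'I_n} | #|e| == k].

(* Every red/blue colouring (true/false) of the subsets of 'I_N (only the
   k-subsets matter) contains a copy of H = ('I_n, E), i.e. an injective
   vertex map phi such that all images phi(e), e in E, receive the same colour. *)
Definition ramsey_prop (n : nat) (E : {set {set 'I_n}}) (N : nat) : bool :=
  [forall col : {ffun {set 'I_N} -> bool},
    [exists phi : {ffun 'I_n -> 'I_N},
      injectiveb phi &&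
      ([forall e in E, col (phi @: e)] || [forall e in E, ~~ col (phi @: e)])]].

(* R(H): the least N with ramsey_prop (exists by Ramsey's theorem; 0 otherwise). *)
Definition ramsey_number (n : nat) (E : {set {set 'I_n}}) : nat :=
  match excluded_middle_informative (exists N, ramsey_prop E N) with
  | left ex => ex_minn ex
  | right _ => 0
  end.

(* Stepping up twice (Erdos-Hajnal) from a random colouring shows that
   R(K_N^(k)) exceeds 2^2^2^(N+1) once k >= 5 and N is large. Hence all the
   2^2^N + 1 scales N^(2t+1), t <= 2^2^N, lie below R(K_N^(k)). They are
   pairwise a factor N^2 apart, so each of the 2^2^N hypergraphs H on N
   vertices has R(H) within a factor N of at most one of them, and some scale
   g(N) is a factor N away from every R(H). The theorem holds for f the largest
   non-decreasing minorant of g, which agrees with g infinitely often. *)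

From Stdlib Require Import ClassicalEpsilon.
From mathcomp Require Import all_boot zify.

Set Implicit Arguments.
Unset Strict Implicit.
Unset Printing Implicit Defensive.

(** * Ramsey's theorem *)

Definition homogeneous (T : finType) (chi : {set T} -> bool) j (S : {set T}) b :=
  forall A : {set T}, A \subset S -> #|A| = j -> chi A = b.

Definition hom_free (T : finType) (chi : {set T} -> bool) j n :=
  forall (S : {set T}) b, n <= #|S| -> ~ homogeneous chi j S b.

Lemma subset_of_card (T : finType) (S : {set T}) n :
  n <= #|S| -> exists2 B : {set T}, B \subset S & #|B| = n.
Proof.
case/card_geqP => s [s_uniq <- sS]; exists [set x in s].
  by apply/subsetP => x; rewrite inE => /sS.
by rewrite cardsE (card_uniqP s_uniq).
Qed.

Lemma imset_preimset (aT rT : finType) (f : aT -> rT) (D : {set aT}) (A : {set rT}) :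
  A \subset f @: D -> f @: (f @^-1: A) = A.
Proof.
move=> sA; apply/setP => y; apply/imsetP/idP => [[x] | yA].
  by rewrite inE => ? ->.
by have /imsetP[x _ eyx] := subsetP sA y yA; exists x; rewrite ?inE -?eyx.
Qed.

Lemma homogeneousS (T : finType) (chi : {set T} -> bool) j (S S' : {set T}) b :
  S' \subset S -> homogeneous chi j S b -> homogeneous chi j S' b.
Proof. by move=> sS hS A sA; apply: hS; apply: subset_trans sA sS. Qed.

Lemma hom_freeW (T : finType) (chi : {set T} -> bool) j n n' :
  n <= n' -> hom_free chi j n -> hom_free chi j n'.
Proof. by move=> le_n hf S b hS; apply: hf; apply: leq_trans hS. Qed.

Lemma hom_free_comp (T T' : finType) (f : T' -> T) (chi : {set T} -> bool) j n :
  injective f -> hom_free chi j n -> hom_free (fun A => chi (f @: A)) j n.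
Proof.
move=> f_inj hf S b hS hom; apply: (hf (f @: S) b); first by rewrite card_imset.
move=> A sA cA; have eA := imset_preimset sA.
rewrite -eA; apply: hom; last by rewrite -cA -{2}eA card_imset.
apply/subsetP => x; rewrite inE => /(subsetP sA)/imsetP[x' x'S].
by move/f_inj ->.
Qed.

Lemma homogeneous_setU1 (T : finType) (chi : {set T} -> bool) j v (S : {set T}) b :
  v \notin S -> homogeneous (fun A => chi (v |: A)) j S b ->
  homogeneous chi j.+1 S b -> homogeneous chi j.+1 (v |: S) b.
Proof.
move=> vS hlink hS A sA cA; case vA: (v \in A).
  rewrite -(setD1K vA); apply: hlink; last by have := cardsD1 v A; rewrite vA; lia.
  apply/subsetP => x; rewrite !inE => /andP[xv /(subsetP sA)].
  by rewrite !inE (negbTE xv).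
apply: hS cA; apply/subsetP => x xA; move: (subsetP sA x xA).
by rewrite !inE => /orP[/eqP exv | //]; move: vA; rewrite -exv xA.
Qed.

Definition ramsey_bound k s t N := forall (T : finType) (U : {set T})
  (chi : {set T} -> bool), N <= #|U| -> exists (S : {set T}) (b : bool),
  [/\ S \subset U, (if b then s else t) <= #|S| & homogeneous chi k S b].

Lemma ramsey_bound0 s t : ramsey_bound 0 s t (s + t).
Proof.
move=> T U chi hU; exists U, (chi set0); split=> //; first by case: (chi set0); lia.
by move=> A _ /eqP; rewrite cards_eq0 => /eqP ->.
Qed.

Lemma ramsey_bound_empty k s t : s = 0 \/ t = 0 -> ramsey_bound k.+1 s t 0.
Proof.
move=> st0 T U chi _; exists set0, (s == 0); split; rewrite ?sub0set //.
  by rewrite cards0; case: eqP; lia.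
by move=> A; rewrite subset0 => /eqP ->; rewrite cards0.
Qed.

(* Colour the [k]-sets by their union with a fixed vertex [v], then recurse
   inside a homogeneous set of that link colouring. *)
Lemma ramsey_bound_step k s t N1 N2 N3 :
  ramsey_bound k.+1 s t.+1 N1 -> ramsey_bound k.+1 s.+1 t N2 ->
  ramsey_bound k N1 N2 N3 -> ramsey_bound k.+1 s.+1 t.+1 N3.+1.
Proof.
move=> R1 R2 R3 T U chi hU; have /card_gt0P[v vU] : 0 < #|U| by lia.
have cUv : N3 <= #|U :\ v| by have := cardsD1 v U; rewrite vU; lia.
have [S [b [sS cS hS]]] := R3 T _ (fun A => chi (v |: A)) cUv.
have [S' [b' [sS' cS' hS']]] : exists (S' : {set T}) (b' : bool),
    [/\ S' \subset S, (if b' then (if b then s else s.+1)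
                             else (if b then t.+1 else t)) <= #|S'|
      & homogeneous chi k.+1 S' b'].
  by case: b cS hS => cS _; [exact: R1 | exact: R2].
have S'U : S' \subset U :\ v by apply: subset_trans sS' sS.
have vS' : v \notin S' by apply/negP => /(subsetP S'U); rewrite !inE eqxx.
case: (eqVneq b' b) cS' hS' => [-> | neq_b] cS' hS'.
  exists (v |: S'), b; split.
  - by rewrite subUset sub1set vU (subset_trans S'U) ?subD1set.
  - by rewrite cardsU1 vS'; move: cS'; case: (b).
  - exact: homogeneous_setU1 vS' (homogeneousS sS' hS) hS'.
exists S', b'; split=> //; first by rewrite (subset_trans S'U) ?subD1set.
by move: neq_b cS'; case: (b); case: (b').
Qed.

Lemma ramsey_bound_exists k s t : exists N, ramsey_bound k s t N.
Proof.
elim: k s t => [|k IHk] s t; first by exists (s + t); apply: ramsey_bound0.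
have [q le_st] : exists q, s + t <= q by exists (s + t).
elim: q s t le_st => [|q IHq] s t le_st.
  by exists 0; apply: ramsey_bound_empty; lia.
case: s le_st => [|s] le_st; first by exists 0; apply: ramsey_bound_empty; left.
case: t le_st => [|t] le_st; first by exists 0; apply: ramsey_bound_empty; right.
have [N1 R1] := IHq s t.+1 ltac:(lia).
have [N2 R2] := IHq s.+1 t ltac:(lia).
have [N3 R3] := IHk N1 N2.
by exists N3.+1; apply: ramsey_bound_step R1 R2 R3.
Qed.

Section CompleteRamseyNumber.

Variables k n : nat.

Local Notation RK := (ramsey_number (complete_kgraph k n)).

Lemma ramsey_prop_complete N :
  (forall chi : {set 'I_N} -> bool,
     exists (S : {set 'I_N}) b, n <= #|S| /\ homogeneous chi k S b) ->
  ramsey_prop (complete_kgraph k n) N.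
Proof.
move=> hom; apply/forallP => col; have [S [b [hS homS]]] := hom (fun A => col A).
pose phi := [ffun i : 'I_n => enum_val (widen_ord hS i)].
have phi_inj : injective phi.
  by move=> i1 i2; rewrite !ffunE => /enum_val_inj/(congr1 val)/=/ord_inj.
have col_b e : e \in complete_kgraph k n -> col (phi @: e) = b.
  rewrite inE => /eqP ce; apply: homS; last by rewrite card_imset.
  by apply/subsetP => _ /imsetP[i _ ->]; rewrite ffunE enum_valP.
apply/existsP; exists phi; rewrite (introT (injectiveP _) phi_inj) /=.
by clear homS; case: b col_b => col_b; apply/orP; [left | right];
  apply/forall_inP => e /col_b ->.
Qed.

Lemma hom_free_not_ramsey_prop N (chi : {set 'I_N} -> bool) :
  hom_free chi k n -> ~~ ramsey_prop (complete_kgraph k n) N.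
Proof.
move=> hf; apply/negP => /forallP/(_ [ffun A => chi A])/existsP[phi].
case/andP => /injectiveP phi_inj mono.
have [b chi_b] : exists b, forall e : {set 'I_n}, #|e| = k -> chi (phi @: e) = b.
  have in_K (e : {set 'I_n}) : #|e| = k -> e \in complete_kgraph k n by rewrite inE => ->.
  case/orP: mono => /forall_inP mono; [exists true | exists false] => e /in_K/mono;
    by rewrite ffunE // => /negbTE.
apply: (hf (phi @: setT) b); first by rewrite card_imset // cardsT card_ord.
move=> A sA cA; have eA := imset_preimset sA.
by rewrite -eA chi_b // -cA -{2}eA card_imset.
Qed.

Lemma ramsey_number_completeP : ramsey_prop (complete_kgraph k n) RK.
Proof.
rewrite /ramsey_number; case: excluded_middle_informative => [ex | []].
  by case: ex_minnP.
have [N RN] := ramsey_bound_exists k n n.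
exists N; apply: ramsey_prop_complete => chi.
have [|S [b [_ hS homS]]] := RN _ [set: 'I_N] chi; first by rewrite cardsT card_ord.
by exists S, b; case: b hS homS.
Qed.

Lemma ramsey_number_complete_ge : n <= RK.
Proof.
case/forallP/(_ [ffun => true])/existsP: ramsey_number_completeP => phi.
by case/andP => /injectiveP/leq_card; rewrite !card_ord.
Qed.

Lemma hom_free_ramsey_number_gt L (chi : {set 'I_L} -> bool) :
  hom_free chi k n -> L < RK.
Proof.
move=> hf; rewrite ltnNge; apply/negP => le_RK.
have w_inj : injective (widen_ord le_RK) by move=> x y /(congr1 val)/=/ord_inj.
have := hom_free_not_ramsey_prop (hom_free_comp w_inj hf).
by rewrite ramsey_number_completeP.
Qed.

End CompleteRamseyNumber.

(** * Random colourings *)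

Lemma card_ffun_const_on (T : finType) (D : {set T}) (b : bool) :
  #|[set f : {ffun T -> bool} | [forall x in D, f x == b]]| * 2 ^ #|D| = 2 ^ #|T|.
Proof.
have -> : #|[set f : {ffun T -> bool} | [forall x in D, f x == b]]| =
          #|pffun_on b (~: D) [set: bool]|.
  apply: eq_card => f; rewrite inE; apply/forall_inP/pffun_onP => [fD | [fD _] x xD].
    split; last by move=> y; rewrite inE.
    by apply/subsetP => x; rewrite !inE; apply: contra => /fD.
  by apply: contraLR xD => fxb; have := subsetP fD x fxb; rewrite inE.
by rewrite card_pffun_on cardsT card_bool -expnD addnC cardsC.
Qed.

Lemma card_bigcup_leq (I T : finType) (P : pred I) (F : I -> {set T}) :
  #|\bigcup_(i | P i) F i| <= \sum_(i | P i) #|F i|.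
Proof.
elim/big_ind2: _ => [|X1 s1 X2 s2 le1 le2|//]; first by rewrite cards0.
by rewrite cardsU; lia.
Qed.

(* Union bound: fewer than [2 ^ #|T|] colourings make some [n]-set homogeneous. *)
Lemma hom_free_random L j n : 'C(L, n) * 2 < 2 ^ 'C(n, j) ->
  exists chi : {set 'I_L} -> bool, hom_free chi j n.
Proof.
move=> hC; pose T := {set 'I_L}.
pose hom_cols (S : T) b :=
  [set f : {ffun T -> bool} |
    [forall A in [set A : T | A \subset S & #|A| == j], f A == b]].
pose Bad := \bigcup_(S : T | #|S| == n) (hom_cols S true :|: hom_cols S false).
have card_hom_cols (S : T) b : #|S| = n -> #|hom_cols S b| * 2 ^ 'C(n, j) = 2 ^ #|T|.
  by move=> <-; rewrite -cards_draws card_ffun_const_on.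
have card_Bad : #|Bad| * 2 ^ 'C(n, j) < 2 ^ #|T| * 2 ^ 'C(n, j).
  apply: (@leq_ltn_trans ('C(L, n) * 2 * 2 ^ #|T|)); last first.
    by rewrite mulnC ltn_pmul2l ?expn_gt0.
  apply: leq_trans (leq_mul (card_bigcup_leq _ _) (leqnn _)) _.
  rewrite big_distrl /=.
  rewrite (eq_bigl (fun S => S \in [set S : T | #|S| == n])) => [|S]; last by rewrite inE.
  have card_nsets : #|[set S : T | #|S| == n]| = 'C(L, n) by rewrite card_draws card_ord.
  rewrite -card_nsets -mulnA -sum_nat_const; apply: leq_sum => S.
  rewrite inE => /eqP cS; apply: leq_trans (leq_mul (leq_card_setU _ _) (leqnn _)) _.
  by rewrite mulnDl !card_hom_cols // addnn mul2n.
have [f f_good] : exists f : {ffun T -> bool}, f \notin Bad.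
  apply/existsP; rewrite -negb_forall; apply/negP => /forallP all_bad.
  have eBad : Bad = setT by apply/setP => f; rewrite inE all_bad.
  by move: card_Bad; rewrite eBad cardsT card_ffun card_bool ltnn.
exists (fun A => f A) => S b hS homS; have [S' sS' cS'] := subset_of_card hS.
apply: (negP f_good); apply/bigcupP; exists S'; first by rewrite cS'.
have : f \in hom_cols S' b.
  rewrite inE; apply/forall_inP => A; rewrite inE => /andP[sA /eqP cA].
  by rewrite (homogeneousS sS' homS).
by case: b {homS} => fh; rewrite inE fh ?orbT.
Qed.

(** * Stepping up *)

Lemma delta_ex x y : exists l, x %/ 2 ^ l.+1 == y %/ 2 ^ l.+1.
Proof.
have lt_pow z : z <= x + y -> z < 2 ^ (x + y).+1.
  by move=> le_z; apply: leq_trans (ltn_expl z (isT : 1 < 2)) _; rewrite leq_exp2l // leqW.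
by exists (x + y); rewrite !divn_small ?lt_pow ?leq_addr ?leq_addl.
Qed.

(* For [x != y], [delta x y] is the highest binary digit in which [x] and [y]
   differ. *)
Definition delta x y := ex_minn (delta_ex x y).

Lemma divn_exp2_eqW l l' x y :
  l <= l' -> x %/ 2 ^ l = y %/ 2 ^ l -> x %/ 2 ^ l' = y %/ 2 ^ l'.
Proof. by move=> /subnKC <-; rewrite expnD !divnMA => ->. Qed.

Lemma leq_delta x y l : (delta x y <= l) = (x %/ 2 ^ l.+1 == y %/ 2 ^ l.+1).
Proof.
rewrite /delta; case: ex_minnP => d /eqP eq_d d_min.
by apply/idP/eqP => [le_dl | /eqP/d_min //]; apply: divn_exp2_eqW eq_d.
Qed.

Lemma delta_max x y z : x <= y -> y <= z -> delta x z = maxn (delta x y) (delta y z).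
Proof.
move=> le_xy le_yz; have eq_xz l : (x %/ 2 ^ l == z %/ 2 ^ l) =
    (x %/ 2 ^ l == y %/ 2 ^ l) && (y %/ 2 ^ l == z %/ 2 ^ l).
  have := leq_div2r (2 ^ l) le_xy; have := leq_div2r (2 ^ l) le_yz.
  by case: eqP; case: eqP; case: eqP => /=; lia.
apply/eqP; rewrite eqn_leq leq_delta eq_xz -!leq_delta leq_maxl leq_maxr /=.
have := leqnn (delta x z); rewrite leq_delta eq_xz => /andP[eq1 eq2].
by rewrite geq_max !leq_delta eq1 eq2.
Qed.

Lemma delta_div_neq x y : x != y -> x %/ 2 ^ delta x y != y %/ 2 ^ delta x y.
Proof.
case E: (delta x y) => [|d]; first by rewrite expn0 !divn1.
by rewrite -leq_delta E ltnn.
Qed.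

Lemma delta_lt m x y : x < 2 ^ m -> y < 2 ^ m -> x != y -> delta x y < m.
Proof.
case: m => [|m] lt_x lt_y neq_xy; last by rewrite ltnS leq_delta !divn_small.
by move: lt_x lt_y neq_xy; rewrite expn0 !ltnS !leqn0 => /eqP-> /eqP->.
Qed.

Lemma delta_neq x y z : x < y -> y < z -> delta x y != delta y z.
Proof.
move=> lt_xy lt_yz; apply/eqP => eq_d.
have /delta_div_neq ne_xy : x != y by rewrite neq_ltn lt_xy.
have /delta_div_neq ne_yz : y != z by rewrite neq_ltn lt_yz.
have eq_xy : x %/ 2 ^ (delta x y).+1 = y %/ 2 ^ (delta x y).+1.
  by apply/eqP; rewrite -leq_delta.
have eq_yz : y %/ 2 ^ (delta x y).+1 = z %/ 2 ^ (delta x y).+1.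
  by apply/eqP; rewrite -leq_delta eq_d.
move: ne_xy ne_yz eq_xy eq_yz; rewrite -eq_d expnSr !divnMA.
have := leq_div2r (2 ^ delta x y) (ltnW lt_xy).
have := leq_div2r (2 ^ delta x y) (ltnW lt_yz).
move: (x %/ _) (y %/ _) (z %/ _) => a b c; lia.
Qed.

(* Once [p] takes the value [b] it keeps it for a whole window of length [j],
   so [p] is [~~ b] up to some point and [b] afterwards. *)
Lemma long_constant_run (p : nat -> bool) len n j b : 2 < j -> 2 * n + j <= len ->
  (forall i, i + j <= len -> p i = b -> forall t, t.+2 <= j -> p (i + t) = b) ->
  exists a c b', [/\ a + n <= c, c <= len & forall t, a <= t -> t.+1 < c -> p t = b'].
Proof.
move=> lt_j le_len keep.
have neg_of_neq (x y : bool) : x != y -> x = ~~ y by case: x; case: y.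
have [ex_b | no_b] := boolP [exists q : 'I_len, (q.+1 < len) && (p q == b)]; last first.
  exists 0, len, (~~ b); split=> [|//|t _ lt_t]; first lia; apply: neg_of_neq.
  by move/existsPn/(_ (Ordinal (ltnW lt_t))): no_b; rewrite /= lt_t.
have {ex_b} : exists q, (q.+1 < len) && (p q == b).
  by case/existsP: ex_b => q ?; exists q.
case/ex_minnP => q /andP[lt_q /eqP pq] q_min.
have before t : t < q -> p t = ~~ b.
  move=> lt_tq; apply/neg_of_neq/negP => /eqP ptb.
  by have := q_min t; rewrite ptb eqxx andbT; lia.
have [le_nq | lt_qn] := leqP n q.+1.
  by exists 0, q.+1, (~~ b); split=> // [|t _ lt_t]; [lia | apply: before].
have from_q t : q <= t -> t + j <= len -> p t = b.
  elim: t => [|t IHt] le_qt le_tj; first by move: pq; rewrite (_ : q = 0) //; lia.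
  have [<- // | neq_qt] := eqVneq q t.+1.
  by rewrite -addn1 (keep t) ?IHt //; lia.
exists q, len, b; split=> //; first lia.
move=> t le_qt lt_t; have [le_tj | lt_jt] := leqP (t + j) len; first exact: from_q.
have -> : t = len - j + (t - (len - j)) by lia.
by rewrite (keep (len - j)) ?from_q //; lia.
Qed.

Lemma sorted_enum_ord n (A : {set 'I_n}) : sorted ltn [seq val x | x <- enum A].
Proof.
rewrite -[enum A](eq_filter (mem_enum _)) -(eq_filter (mem_map val_inj _)) -filter_map.
by rewrite (sorted_filter ltn_trans) // unlock val_ord_enum iota_ltn_sorted.
Qed.

Section StepUp.

Variables (m : nat) (chi : {set 'I_m} -> bool).
Hypothesis m_gt0 : 0 < m.

Local Notation V := 'I_(2 ^ m).

Definition delta_incr (A : {set V}) := [forall x in A, forall y in A, forall z in A,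
  (x < y < z) ==> (delta x y < delta y z)].

Definition delta_decr (A : {set V}) := [forall x in A, forall y in A, forall z in A,
  (x < y < z) ==> (delta y z < delta x y)].

Definition delta_set (A : {set V}) : {set 'I_m} :=
  [set i : 'I_m | [exists x in A, exists y in A, (x < y) && (delta x y == i)]].

Definition first_ascent (A : {set V}) :=
  let s := [seq val x | x <- enum A] in
  delta (nth 0 s 0) (nth 0 s 1) < delta (nth 0 s 1) (nth 0 s 2).

Definition stepup (A : {set V}) :=
  if delta_incr A || delta_decr A then chi (delta_set A) else first_ascent A.

Lemma delta_incrP (A : {set V}) : reflect (forall x y z, x \in A -> y \in A -> z \in A ->
  x < y -> y < z -> delta x y < delta y z) (delta_incr A).
Proof.
apply: (iffP forall_inP) => [h x y z xA yA zA xy yz | h x xA].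
  by move/forall_inP/(_ y yA)/forall_inP/(_ z zA)/implyP: (h x xA); apply; rewrite xy.
by apply/forall_inP => y yA; apply/forall_inP => z zA; apply/implyP => /andP[]; apply: h.
Qed.

Lemma delta_decrP (A : {set V}) : reflect (forall x y z, x \in A -> y \in A -> z \in A ->
  x < y -> y < z -> delta y z < delta x y) (delta_decr A).
Proof.
apply: (iffP forall_inP) => [h x y z xA yA zA xy yz | h x xA].
  by move/forall_inP/(_ y yA)/forall_inP/(_ z zA)/implyP: (h x xA); apply; rewrite xy.
by apply/forall_inP => y yA; apply/forall_inP => z zA; apply/implyP => /andP[]; apply: h.
Qed.

Lemma delta_setP (A : {set V}) (i : 'I_m) : reflect
  (exists x y, [/\ x \in A, y \in A, x < y & delta x y = i]) (i \in delta_set A).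
Proof.
rewrite inE; apply: (iffP existsP) => [[x /andP[xA /existsP[y]]] | [x [y [xA yA xy <-]]]].
  by case/and3P => yA xy /eqP; exists x, y.
by exists x; rewrite xA; apply/existsP; exists y; rewrite yA xy /=.
Qed.

Definition delta_ord (x y : V) : 'I_m := insubd (Ordinal m_gt0) (delta x y).

Lemma val_delta_ord (x y : V) : x < y -> val (delta_ord x y) = delta x y.
Proof. by move=> lt_xy; rewrite val_insubd delta_lt // neq_ltn lt_xy. Qed.

Lemma stepup_hom_labels (X : {set V}) x0 (phi : V -> 'I_m) j b :
  {in X :\ x0 &, injective phi} ->
  (forall Y : {set V}, Y \subset X :\ x0 -> stepup (x0 |: Y) = chi (phi @: Y)) ->
  x0 \in X -> homogeneous stepup j.+1 X b -> homogeneous chi j (phi @: (X :\ x0)) b.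
Proof.
move=> phi_inj stepupE x0X homX B sB cB.
pose Y := (X :\ x0) :&: phi @^-1: B.
have sY : Y \subset X :\ x0 by apply: subsetIl.
have eB : phi @: Y = B.
  apply/setP => i; apply/imsetP/idP => [[y] | iB].
    by rewrite !inE => /andP[_ phiB] ->.
  have /imsetP[y yX eiy] := subsetP sB i iB.
  by exists y; rewrite // in_setI yX inE -eiy.
rewrite -eB -stepupE //; apply: homX.
  by rewrite subUset sub1set x0X (subset_trans sY) ?subD1set.
have x0Y : x0 \notin Y by rewrite !inE eqxx.
rewrite cardsU1 x0Y -cB -eB card_in_imset // => y z /(subsetP sY) yX /(subsetP sY).
exact: phi_inj.
Qed.

Lemma delta_incrS (A X : {set V}) : A \subset X -> delta_incr X -> delta_incr A.
Proof.
move=> sA /delta_incrP incr; apply/delta_incrP => x y z /(subsetP sA) xX /(subsetP sA) yX.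
by move/(subsetP sA); apply: incr.
Qed.

Lemma delta_decrS (A X : {set V}) : A \subset X -> delta_decr X -> delta_decr A.
Proof.
move=> sA /delta_decrP decr; apply/delta_decrP => x y z /(subsetP sA) xX /(subsetP sA) yX.
by move/(subsetP sA); apply: decr.
Qed.

Section Pivot.

Variables (X : {set V}) (x0 : V).
Hypothesis x0X : x0 \in X.

Lemma lt_pivot_min (y : V) : {in X, forall y : V, x0 <= y} -> y \in X :\ x0 -> x0 < y.
Proof.
move=> x0_min; rewrite in_setD1 => /andP[neq_y yX].
by rewrite ltn_neqAle (inj_eq val_inj) eq_sym neq_y x0_min.
Qed.

Lemma lt_pivot_max (y : V) : {in X, forall y : V, y <= x0} -> y \in X :\ x0 -> y < x0.
Proof.
move=> x0_max; rewrite in_setD1 => /andP[neq_y yX].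
by rewrite ltn_neqAle (inj_eq val_inj) neq_y x0_max.
Qed.

Section Incr.

Hypotheses (incr : delta_incr X) (x0_min : {in X, forall y : V, x0 <= y}).

Lemma delta_incr_min : {in X &, forall x y : V, x < y -> delta x y = delta x0 y}.
Proof.
move=> x y xX yX lt_xy; have [<- // | neq_x] := eqVneq x0 x.
have lt_x0 : x0 < x by apply: (lt_pivot_min x0_min); rewrite in_setD1 eq_sym neq_x.
have := delta_incrP _ incr _ _ _ x0X xX yX lt_x0 lt_xy.
by rewrite (delta_max (ltnW lt_x0) (ltnW lt_xy)); lia.
Qed.

Lemma delta_ord_incr_inj : {in X :\ x0 &, injective (delta_ord x0)}.
Proof.
have lt_min y z : y \in X :\ x0 -> z \in X :\ x0 -> y < z -> delta x0 y < delta x0 z.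
  move=> yX0 zX0 lt_yz; have yX := subsetP (subD1set X x0) y yX0.
  have zX := subsetP (subD1set X x0) z zX0.
  rewrite -(delta_incr_min yX zX lt_yz).
  exact: delta_incrP _ incr _ _ _ x0X yX zX (lt_pivot_min x0_min yX0) lt_yz.
move=> y z yX0 zX0 /(congr1 val).
rewrite !val_delta_ord ?(lt_pivot_min x0_min yX0) ?(lt_pivot_min x0_min zX0) //.
case: (ltngtP y z) => [lt_yz | lt_zy | /val_inj //].
  by have := lt_min _ _ yX0 zX0 lt_yz; lia.
by have := lt_min _ _ zX0 yX0 lt_zy; lia.
Qed.

Lemma stepup_incr_min (Y : {set V}) :
  Y \subset X :\ x0 -> stepup (x0 |: Y) = chi (delta_ord x0 @: Y).
Proof.
move=> sY; have sX : x0 |: Y \subset X.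
  by rewrite subUset sub1set x0X (subset_trans sY) ?subD1set.
rewrite /stepup (delta_incrS sX incr); congr chi; apply/setP => i.
apply/delta_setP/imsetP => [[x [y [xA yA lt_xy e_i]]] | [y yY ->]].
  have yX0 : y \in X :\ x0.
    rewrite in_setD1 (subsetP sX) // andbT; apply: contraTneq lt_xy => ->.
    by rewrite -leqNgt x0_min // (subsetP sX).
  have yY : y \in Y.
    by move: yA; rewrite in_setU1 => /orP[/eqP eq_y | //]; rewrite eq_y setD11 in yX0.
  exists y => //; apply: val_inj.
  rewrite /= val_delta_ord ?(lt_pivot_min x0_min yX0) // -e_i.
  by rewrite delta_incr_min ?(subsetP sX).
have lt_y := lt_pivot_min x0_min (subsetP sY y yY).
by exists x0, y; rewrite setU11 in_setU1 yY orbT val_delta_ord.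
Qed.

End Incr.

Section Decr.

Hypotheses (decr : delta_decr X) (x0_max : {in X, forall y : V, y <= x0}).

Lemma delta_decr_max : {in X &, forall x y : V, x < y -> delta x y = delta x x0}.
Proof.
move=> x y xX yX lt_xy; have [-> // | neq_y] := eqVneq y x0.
have lt_y0 : y < x0 by apply: (lt_pivot_max x0_max); rewrite in_setD1 neq_y.
have := delta_decrP _ decr _ _ _ xX yX x0X lt_xy lt_y0.
by rewrite (delta_max (ltnW lt_xy) (ltnW lt_y0)); lia.
Qed.

Lemma delta_ord_decr_inj : {in X :\ x0 &, injective (delta_ord^~ x0)}.
Proof.
have lt_max y z : y \in X :\ x0 -> z \in X :\ x0 -> y < z -> delta z x0 < delta y x0.
  move=> yX0 zX0 lt_yz; have yX := subsetP (subD1set X x0) y yX0.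
  have zX := subsetP (subD1set X x0) z zX0.
  rewrite -(delta_decr_max yX zX lt_yz).
  exact: delta_decrP _ decr _ _ _ yX zX x0X lt_yz (lt_pivot_max x0_max zX0).
move=> y z yX0 zX0 /(congr1 val).
rewrite !val_delta_ord ?(lt_pivot_max x0_max yX0) ?(lt_pivot_max x0_max zX0) //.
case: (ltngtP y z) => [lt_yz | lt_zy | /val_inj //].
  by have := lt_max _ _ yX0 zX0 lt_yz; lia.
by have := lt_max _ _ zX0 yX0 lt_zy; lia.
Qed.

Lemma stepup_decr_max (Y : {set V}) :
  Y \subset X :\ x0 -> stepup (x0 |: Y) = chi ((delta_ord^~ x0) @: Y).
Proof.
move=> sY; have sX : x0 |: Y \subset X.
  by rewrite subUset sub1set x0X (subset_trans sY) ?subD1set.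
rewrite /stepup (delta_decrS sX decr) orbT; congr chi; apply/setP => i.
apply/delta_setP/imsetP => [[x [y [xA yA lt_xy e_i]]] | [x xY ->]].
  have xX0 : x \in X :\ x0.
    rewrite in_setD1 (subsetP sX) // andbT; apply: contraTneq lt_xy => ->.
    by rewrite -leqNgt x0_max // (subsetP sX).
  have xY : x \in Y.
    by move: xA; rewrite in_setU1 => /orP[/eqP eq_x | //]; rewrite eq_x setD11 in xX0.
  exists x => //; apply: val_inj.
  rewrite /= val_delta_ord ?(lt_pivot_max x0_max xX0) // -e_i.
  by rewrite delta_decr_max ?(subsetP sX).
have lt_x := lt_pivot_max x0_max (subsetP sY x xY).
by exists x, x0; rewrite setU11 in_setU1 xY orbT val_delta_ord.
Qed.

End Decr.

End Pivot.

Lemma stepup_hom_monotone (X : {set V}) n j b :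
  delta_incr X || delta_decr X -> #|X| = n.+1 -> homogeneous stepup j.+1 X b ->
  exists2 D : {set 'I_m}, #|D| = n & homogeneous chi j D b.
Proof.
move=> mono cX homX; have /card_gt0P[x xX] : 0 < #|X| by rewrite cX.
have cX0 x0 : x0 \in X -> #|X :\ x0| = n.
  by move=> x0X; apply/eqP; rewrite -eqSS -cX (cardsD1 x0 X) x0X.
case/orP: mono => [incr | decr].
  case: (arg_minnP val xX) => x0 x0X x0_min.
  exists (delta_ord x0 @: (X :\ x0)).
    by rewrite card_in_imset ?cX0 //; exact: delta_ord_incr_inj.
  apply: stepup_hom_labels homX => //; first exact: delta_ord_incr_inj.
  exact: stepup_incr_min.
case: (arg_maxnP val xX) => x0 x0X x0_max.
exists ((delta_ord^~ x0) @: (X :\ x0)).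
  by rewrite card_in_imset ?cX0 //; exact: delta_ord_decr_inj.
apply: stepup_hom_labels homX => //; first exact: delta_ord_decr_inj.
exact: stepup_decr_max.
Qed.

Section Sequence.

Variables (e : nat -> V) (r : nat).
Hypothesis e_incr : forall s t, s < t -> t < r -> e s < e t.

Definition seg a l : {set V} := [set e (a + t) | t : 'I_l].

Definition delta_seq t := delta (e t) (e t.+1).

Lemma segP a l x : reflect (exists2 p, p < l & x = e (a + p)) (x \in seg a l).
Proof.
by apply: (iffP imsetP) => [[t _ ->] | [p lt_p ->]]; [exists t | exists (Ordinal lt_p)].
Qed.

Lemma inc_seq_ltn_idx s t : s < r -> t < r -> e s < e t -> s < t.
Proof.
move=> lt_s lt_t lt_e; case: (ltngtP s t) => // [lt_ts | eq_st].
  by have := e_incr lt_ts lt_s; lia.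
by move: lt_e; rewrite eq_st ltnn.
Qed.

Lemma inc_seq_inj s t : s < r -> t < r -> e s = e t -> s = t.
Proof.
move=> lt_s lt_t eq_e; case: (ltngtP s t) => // lt_st.
  by have := e_incr lt_st lt_t; rewrite eq_e ltnn.
by have := e_incr lt_st lt_s; rewrite eq_e ltnn.
Qed.

Lemma card_seg a l : a + l <= r -> #|seg a l| = l.
Proof.
move=> le_r; rewrite card_imset ?card_ord // => s t /inc_seq_inj eq_st.
have := ltn_ord s; have := ltn_ord t => lt_t lt_s.
by apply: val_inj => /=; have := eq_st ltac:(lia) ltac:(lia); lia.
Qed.

Lemma enum_seg a l : a + l <= r ->
  [seq val x | x <- enum (seg a l)] = [seq val (e (a + t)) | t <- iota 0 l].
Proof.
move=> le_r; apply: (irr_sorted_eq ltn_trans ltnn (sorted_enum_ord _)).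
  apply: (homo_sorted_in (P := [pred t | t < l])); last exact: iota_ltn_sorted.
    by move=> s t; rewrite !inE => lt_s lt_t lt_st; apply: e_incr; lia.
  by apply/allP => t; rewrite mem_iota.
move=> x; apply/mapP/mapP => [[y] | [t]].
  by rewrite mem_enum => /segP[p lt_p ->] ->; exists p; rewrite ?mem_iota.
rewrite mem_iota => lt_t ->; exists (e (a + t)) => //.
by rewrite mem_enum; apply/segP; exists t.
Qed.

Lemma first_ascent_seg i l : 2 < l -> i + l <= r ->
  first_ascent (seg i l) = (delta_seq i < delta_seq i.+1).
Proof.
move=> lt_l le_r; rewrite /first_ascent enum_seg //.
by rewrite !(nth_map 0) ?size_iota ?nth_iota ?addn0 ?addn1 ?addn2 //; lia.
Qed.

Lemma delta_seq_neq t : t.+2 < r -> delta_seq t != delta_seq t.+1.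
Proof. by move=> lt_t; apply: delta_neq; apply: e_incr; lia. Qed.

Lemma delta_seq_window i l t : i + l <= r -> delta_incr (seg i l) || delta_decr (seg i l) ->
  t.+2 < l -> (delta_seq (i + t) < delta_seq (i + t).+1) = (delta_seq i < delta_seq i.+1).
Proof.
move=> le_r mono lt_t.
have inW s : s < l -> e (i + s) \in seg i l by move=> lt_s; apply/segP; exists s.
have step s : s.+2 < l -> [/\ e (i + s) \in seg i l, e (i + s).+1 \in seg i l,
    e (i + s).+2 \in seg i l, e (i + s) < e (i + s).+1 & e (i + s).+1 < e (i + s).+2].
  by move=> lt_s; rewrite -!addnS; split; rewrite ?inW //; try apply: e_incr; lia.
have [x1 x2 x3 lt12 lt23] := step t lt_t.
have := step 0 ltac:(lia); rewrite addn0 => -[y1 y2 y3 lt12' lt23'].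
case/orP: mono => [/delta_incrP incr | /delta_decrP decr].
  by rewrite (incr _ _ _ x1 x2 x3 lt12 lt23) (incr _ _ _ y1 y2 y3 lt12' lt23').
have := decr _ _ _ x1 x2 x3 lt12 lt23; have := decr _ _ _ y1 y2 y3 lt12' lt23'.
by rewrite /delta_seq; do 2!move=> /ltnW/leq_gtF->.
Qed.

Section Run.

Variables a c : nat.
Hypotheses (le_ac : a <= c) (lt_cr : c < r).

Local Notation run := (seg a (c - a).+1).

Let in_run x y z : x \in run -> y \in run -> z \in run -> x < y -> y < z -> exists p q s,
  [/\ a <= p, p < q, q < s, s <= c & [/\ x = e p, y = e q & z = e s]].
Proof.
move=> /segP[p lt_p ->] /segP[q lt_q ->] /segP[s lt_s ->] lt_xy lt_yz.
have lt_pq : a + p < a + q by apply: inc_seq_ltn_idx lt_xy; lia.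
have lt_qs : a + q < a + s by apply: inc_seq_ltn_idx lt_yz; lia.
by exists (a + p), (a + q), (a + s); split; rewrite ?leq_addr //; lia.
Qed.

Lemma delta_incr_seg : (forall t, a <= t -> t.+1 < c -> delta_seq t < delta_seq t.+1) ->
  delta_incr run.
Proof.
move=> up; have mono : {in [pred t | a <= t < c] &, {homo delta_seq : s t / s < t}}.
  apply: homo_ltn_in => [y x z lt_xy lt_yz | s t | s]; first exact: ltn_trans lt_yz.
    by rewrite !inE => /andP[? ?] /andP[? ?] u /andP[? ?]; rewrite inE; lia.
  by rewrite !inE => /andP[? ?] /andP[? ?]; apply: up.
have delta_e p q : a <= p -> p < q -> q <= c -> delta (e p) (e q) = delta_seq q.-1.
  move=> le_ap; elim: q => // q IHq lt_pq le_qc.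
  have [<- // | neq_pq] := eqVneq p q.
  have le_pq : e p <= e q by apply/ltnW/e_incr; lia.
  have le_qS : e q <= e q.+1 by apply/ltnW/e_incr; lia.
  rewrite (delta_max le_pq le_qS) IHq; [| lia | lia].
  by apply/maxn_idPr/ltnW/mono; rewrite ?inE; lia.
apply/delta_incrP => x y z xX yX zX lt_xy lt_yz.
have [p [q [s [le_ap lt_pq lt_qs le_sc [-> -> ->]]]]] := in_run xX yX zX lt_xy lt_yz.
by rewrite !delta_e //; try lia; apply: mono; rewrite ?inE; lia.
Qed.

Lemma delta_decr_seg : (forall t, a <= t -> t.+1 < c -> delta_seq t.+1 < delta_seq t) ->
  delta_decr run.
Proof.
move=> down.
have mono : {in [pred t | a <= t < c] &, {homo delta_seq : s t / s < t >-> t < s}}.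
  apply: homo_ltn_in => [y x z lt_yx lt_zy | s t | s]; first exact: ltn_trans lt_yx.
    by rewrite !inE => /andP[? ?] /andP[? ?] u /andP[? ?]; rewrite inE; lia.
  by rewrite !inE => /andP[? ?] /andP[? ?]; apply: down.
have delta_e p q : a <= p -> p < q -> q <= c -> delta (e p) (e q) = delta_seq p.
  move=> le_ap; elim: q => // q IHq lt_pq le_qc.
  have [<- // | neq_pq] := eqVneq p q.
  have le_pq : e p <= e q by apply/ltnW/e_incr; lia.
  have le_qS : e q <= e q.+1 by apply/ltnW/e_incr; lia.
  rewrite (delta_max le_pq le_qS) IHq; [| lia | lia].
  by apply/maxn_idPl/ltnW/mono; rewrite ?inE; lia.
apply/delta_decrP => x y z xX yX zX lt_xy lt_yz.
have [p [q [s [le_ap lt_pq lt_qs le_sc [-> -> ->]]]]] := in_run xX yX zX lt_xy lt_yz.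
by rewrite !delta_e //; try lia; apply: mono; rewrite ?inE; lia.
Qed.

End Run.

End Sequence.

(* A homogeneous set contains a long run of consecutive elements whose
   [delta]s are monotone, and the [delta]s of that run are homogeneous for
   [chi]. *)
Theorem stepup_hom_free j n :
  2 < j -> hom_free chi j n -> hom_free stepup j.+1 (2 * n + j + 1).
Proof.
move=> lt_j hf S b hS homS; have /card_gt0P[x0 _] : 0 < #|S| by lia.
pose e t := nth x0 (enum S) t.
have e_in t : t < #|S| -> e t \in S by move=> lt_t; rewrite -mem_enum mem_nth // -cardE.
have e_incr s t : s < t -> t < #|S| -> e s < e t.
  move=> lt_st lt_t; have lt_s := ltn_trans lt_st lt_t; rewrite cardE in lt_s lt_t.
  have := sorted_ltn_nth ltn_trans 0 (sorted_enum_ord S) s t.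
  by rewrite !inE size_map !(nth_map x0) //; apply.
pose up t := delta_seq e t < delta_seq e t.+1.
(* A window starting with [up i = ~~ b] cannot be coloured by [first_ascent]. *)
have keep i : i + j <= #|S|.-1 -> up i = ~~ b -> forall t, t.+2 <= j -> up (i + t) = ~~ b.
  move=> le_i up_i t lt_t; have le_W : i + j.+1 <= #|S| by lia.
  have sW : seg e i j.+1 \subset S.
    by apply/subsetP => _ /segP[p lt_p ->]; apply: e_in; lia.
  have mono : delta_incr (seg e i j.+1) || delta_decr (seg e i j.+1).
    apply/negPn/negP => /negbTE nmono; have := homS _ sW (card_seg e_incr le_W).
    rewrite /stepup nmono (first_ascent_seg e_incr) //; last lia.
    by move: up_i; rewrite /up => ->; case: (b).
  by move: up_i; rewrite /up (delta_seq_window e_incr le_W mono) // ltnS.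
have le_len : 2 * n + j <= #|S|.-1 by lia.
have [a [c [b' [le_ac le_c run]]]] := long_constant_run lt_j le_len keep.
have lt_cS : c < #|S| by lia.
have monoX : delta_incr (seg e a (c - a).+1) || delta_decr (seg e a (c - a).+1).
  case: b' run => run; apply/orP; [left | right].
    by apply: (delta_incr_seg e_incr _ lt_cS) => [| t ? ?]; rewrite -?/(up t) ?run //; lia.
  apply: (delta_decr_seg e_incr _ lt_cS) => [| t ? ?]; first lia.
  have := delta_seq_neq e_incr (t := t) ltac:(lia); have := run t ltac:(lia) ltac:(lia).
  by rewrite /up; lia.
have sX : seg e a (c - a).+1 \subset S.
  by apply/subsetP => _ /segP[p lt_p ->]; apply: e_in; lia.
have cX : #|seg e a (c - a).+1| = (c - a).+1 by rewrite (card_seg e_incr) //; lia.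
have [D cD homD] := stepup_hom_monotone monoX cX (homogeneousS sX homS).
by apply: (hf D b) homD; lia.
Qed.

End StepUp.

(** * A tower lower bound for complete hypergraphs *)

Lemma bin_leq_exp m n : 'C(m, n) <= m ^ n.
Proof.
apply: leq_trans (leq_pmulr _ (fact_gt0 n)) _; rewrite bin_ffact ffact_prod.
apply: leq_trans (leq_prod (fun (i : 'I_n) _ => leq_subr i m)) _.
by rewrite big_const_ord iter_muln_1.
Qed.

Lemma bin3_leq j p : 3 <= j <= p -> 'C(p + 3, 3) <= 'C(j + p, j).
Proof.
case/andP=> le_3j le_jp; rewrite -(bin_sub (leq_addr p j)) -(bin_sub (leq_addl p 3)).
by rewrite addKn addnK; apply: leq_bin2l; lia.
Qed.

Lemma bin3E p : 'C(p + 3, 3) * 6 = (p + 3) * (p + 2) * (p + 1).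
Proof.
rewrite (bin_ffact (p + 3) 3) !ffactnS ffactn0 muln1 mulnA.
by congr (_ * _ * _); lia.
Qed.

Lemma random_colouring_bound j p : 3 <= j <= p -> 200 <= p ->
  'C(2 ^ (8 * (j + p) + 8), j + p) * 2 < 2 ^ 'C(j + p, j).
Proof.
move=> le_jp le_p; set n := j + p.
apply: (@leq_ltn_trans (2 ^ ((8 * n + 8) * n + 1))).
  by rewrite addn1 expnS mulnC leq_mul2l /= expnM bin_leq_exp.
rewrite ltn_exp2l //; apply: leq_trans (bin3_leq le_jp).
rewrite -(leq_pmul2r (isT : 0 < 6)) bin3E.
have le_n : n <= 2 * p by rewrite /n; lia.
have : (8 * n + 8) * n <= (16 * p + 8) * (2 * p) by apply: leq_mul; lia.
have : p * p * 200 <= p * p * p by rewrite leq_mul2l le_p orbT.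
nia.
Qed.

(* A random colouring of the [(k - 2)]-sets, stepped up twice. *)
Lemma ramsey_complete_tower k N : 5 <= k -> 16 * k + 1700 <= N ->
  2 ^ (2 ^ (2 ^ N.+1)) < ramsey_number (complete_kgraph k N).
Proof.
move=> le_k le_N; pose n := N %/ 8; pose j := k - 2; pose L := 2 ^ (8 * n + 8).
have [chi1 hf1] : exists chi : {set 'I_L} -> bool, hom_free chi j n.
  apply: hom_free_random; rewrite /L (_ : n = j + (n - j)); last by rewrite /n /j; lia.
  by apply: random_colouring_bound; rewrite /n /j; lia.
have hf2 := stepup_hom_free (expn_gt0 2 _) (ltac:(lia) : 2 < j) hf1.
have hf3 := stepup_hom_free (expn_gt0 2 _) (ltac:(lia) : 2 < j.+1) hf2.
have -> : k = j.+2 by rewrite /j; lia.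
apply: leq_trans (hom_free_ramsey_number_gt (hom_freeW _ hf3)); last by rewrite /n; lia.
by rewrite ltnS !leq_exp2l // /n; lia.
Qed.

(** * Gaps between Ramsey numbers *)

Lemma card_set (T : finType) : #|{set T}| = 2 ^ #|T|.
Proof.
rewrite -cardsT -card_powerset; apply: eq_card => A.
by rewrite !inE subsetT.
Qed.

Definition far N v x := (x * N <= v) || (v * N <= x).

Definition separating N v := [forall E : {set {set 'I_N}}, far N v (ramsey_number E)].

Lemma far_scale_unique N s t x : 0 < N ->
  ~~ far N (N ^ (2 * s).+1) x -> ~~ far N (N ^ (2 * t).+1) x -> s = t.
Proof.
have scale_gap s' t' : 0 < N -> s' < t' -> N ^ (2 * s').+1 * N * N <= N ^ (2 * t').+1.
  by move=> N_gt0 lt_st; rewrite -!expnSr leq_pexp2l //; lia.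
rewrite /far !negb_or -!ltnNge => N_gt0 /andP[x_lo x_hi] /andP[x_lo' x_hi'].
have [lt_st | lt_ts | //] := ltngtP s t.
  have := scale_gap _ _ N_gt0 lt_st.
  have : x * N < N ^ (2 * s).+1 * N * N by rewrite ltn_pmul2r.
  lia.
have := scale_gap _ _ N_gt0 lt_ts.
have : x * N < N ^ (2 * t).+1 * N * N by rewrite ltn_pmul2r.
lia.
Qed.

(* Each hypergraph on [N] vertices rules out at most one of the scales
   [N ^ (2 t + 1)], and there are fewer hypergraphs than scales. *)
Lemma separating_scale N : 1 < N ->
  exists t : 'I_(2 ^ 2 ^ N).+1, separating N (N ^ (2 * t).+1).
Proof.
move=> lt_N; have [t sep | no_sep] := pickP (fun t : 'I_(2 ^ 2 ^ N).+1 =>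
  separating N (N ^ (2 * t).+1)); first by exists t.
pose blocker (t : 'I_(2 ^ 2 ^ N).+1) :=
  odflt set0 [pick E : {set {set 'I_N}} | ~~ far N (N ^ (2 * t).+1) (ramsey_number E)].
have blockerP (t : 'I_(2 ^ 2 ^ N).+1) :
    ~~ far N (N ^ (2 * t).+1) (ramsey_number (blocker t)).
  rewrite /blocker; case: pickP => [// | none].
  by move/negbT: (no_sep t); rewrite negb_forall => /existsP[E]; rewrite none.
have blocker_inj : injective blocker.
  move=> s t eq_st; apply: val_inj.
  apply: (@far_scale_unique N _ _ (ramsey_number (blocker t))).
  - lia.
  - by rewrite -eq_st blockerP.
  - exact: blockerP.
by have := leq_card _ blocker_inj; rewrite card_ord !card_set card_ord ltnn.
Qed.

Lemma leq_exp_self N t : N <= N ^ t.+1.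
Proof. by case: N => // N; rewrite -{1}(expn1 N.+1) leq_pexp2l. Qed.

Lemma triple_leq_exp2 N : 4 <= N -> 3 * N <= 2 ^ N.
Proof.
elim: N => // N IHN le_N; have [<- // | neq_N] := eqVneq 3 N.
by rewrite expnS; have := IHN ltac:(lia); lia.
Qed.

Lemma scale_leq_tower N : 4 <= N -> N ^ (2 * 2 ^ 2 ^ N).+1 <= 2 ^ 2 ^ 2 ^ N.+1.
Proof.
move=> le_N; set M := 2 ^ 2 ^ N.
have le_NM : 3 * N <= M.
  by apply: leq_trans (triple_leq_exp2 le_N) (ltnW (ltn_expl _ (isT : 1 < 2))).
apply: leq_trans (_ : (2 ^ N) ^ (2 * M).+1 <= _).
  by rewrite leq_exp2r // ltnW // ltn_expl.
by rewrite -expnM leq_exp2l // expnSr expnM -/M; nia.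
Qed.

Section GapValue.

Variable k : nat.

Local Notation RK N := (ramsey_number (complete_kgraph k N)).

Definition gap_value N :=
  if [pick t : 'I_(2 ^ 2 ^ N).+1 |
        separating N (N ^ (2 * t).+1) && (N ^ (2 * t).+1 <= RK N)] is Some t
  then N ^ (2 * t).+1 else N.

Lemma leq_gap_value N : N <= gap_value N.
Proof. by rewrite /gap_value; case: pickP => [t _ | _]; rewrite ?leq_exp_self. Qed.

Lemma gap_value_leq N : gap_value N <= RK N.
Proof.
by rewrite /gap_value; case: pickP => [t /andP[] | _] //; apply: ramsey_number_complete_ge.
Qed.

Lemma separating_gap_value N : 5 <= k -> 16 * k + 1700 <= N -> separating N (gap_value N).
Proof.
move=> le_k le_N; rewrite /gap_value; case: pickP => [t /andP[] // | none].
have [t sep] := separating_scale (ltac:(lia) : 1 < N).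
move: (none t); rewrite sep /=; apply: contraFT => _.
apply: leq_trans (ltnW (ramsey_complete_tower le_k le_N)).
apply: leq_trans (scale_leq_tower (ltac:(lia) : 4 <= N)).
by rewrite leq_pexp2l; [| lia | have := ltn_ord t; lia].
Qed.

End GapValue.

Section Envelope.

Variable g : nat -> nat.
Hypothesis leq_g : forall n, n <= g n.

Lemma envelope_ex n : exists v, [exists m : 'I_v.+1, (n <= m) && (g m == v)].
Proof.
exists (g n); apply/existsP; exists (Ordinal (leq_g n : n < (g n).+1)).
by rewrite /= leqnn eqxx.
Qed.

(* [envelope n] is the least [g m] over [m >= n]; it is attained at some
   [m <= g m], which bounds the search. *)
Definition envelope n := ex_minn (envelope_ex n).

Lemma envelope_attained n : exists2 m, n <= m & g m = envelope n.
Proof.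
by rewrite /envelope; case: ex_minnP => v /existsP[m /andP[le_m /eqP <-]] _; exists m.
Qed.

Lemma envelope_leq n m : n <= m -> envelope n <= g m.
Proof.
move=> le_nm; rewrite /envelope; case: ex_minnP => v _; apply.
by apply/existsP; exists (Ordinal (leq_g m : m < (g m).+1)); rewrite /= le_nm eqxx.
Qed.

Lemma envelope_mono n n' : n <= n' -> envelope n <= envelope n'.
Proof.
by move=> le_n; have [m le_m <-] := envelope_attained n'; apply: envelope_leq; lia.
Qed.

Lemma leq_envelope n : n <= envelope n.
Proof. by have [m le_m <-] := envelope_attained n; apply: leq_trans (leq_g m). Qed.

Lemma envelope_record n : exists2 m, n <= m & envelope m = g m.
Proof.
have [m le_m eq_m] := envelope_attained n; exists m => //.
by apply/eqP; rewrite eqn_leq envelope_leq //= eq_m envelope_mono.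
Qed.

End Envelope.

(* Imported only now: the Stdlib reals rebind [^] in nat_scope, and the
   statement below needs [%R] to denote R_scope rather than ring_scope. *)
From Stdlib Require Import Rdefinitions Raxioms RIneq Rbasic_fun Lra.

Lemma far_real N v x (c C : R) : (0 < c)%R -> (/ c < INR N)%R -> (C < INR N)%R ->
  far N v x -> (INR x <= c * INR v)%R \/ (C * INR v <= INR x)%R.
Proof.
move=> c_gt0 lt_c lt_C /orP[] /leP/le_INR; rewrite mult_INR => le_x; [left | right].
- have : (1 < c * INR N)%R by rewrite -(Rinv_r c); [apply: Rmult_lt_compat_l | lra].
  have := pos_INR x; nra.
- have := pos_INR v; nra.
Qed.

Theorem theorem1p2 (k : nat) (hk : 5 <= k) :
  exists f : nat -> nat,
    (forall m n : nat, m <= n -> f m <= f n) /\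
    (forall n : nat, n <= f n /\ f n <= ramsey_number (complete_kgraph k n)) /\
    (forall c C : R, (0 < c)%R -> (0 < C)%R ->
       forall n0 : nat, exists n : nat, n0 < n /\
         forall E : {set {set 'I_n}}, uniform k E ->
           (INR (ramsey_number E) <= c * INR (f n))%R \/
           (C * INR (f n) <= INR (ramsey_number E))%R).
Proof.
have leq_g := leq_gap_value k.
exists (envelope leq_g); split=> [m n | ]; first exact: envelope_mono.
split=> [n | c C c_gt0 C_gt0 n0].
  by rewrite leq_envelope (leq_trans (envelope_leq leq_g (leqnn n))) ?gap_value_leq.
have [z lt_z] := INR_unbounded (Rmax (/ c) C)%R.
have [N le_N eq_N] := envelope_record leq_g (maxn (maxn n0.+1 (16 * k + 1700)) z).
have le_zN : (INR z <= INR N)%R by apply/le_INR/leP; lia.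
exists N; split=> [| E _]; first lia.
rewrite eq_N; apply: far_real => //.
- exact: Rle_lt_trans (Rmax_l _ C) (Rlt_le_trans _ _ _ lt_z le_zN).
- exact: Rle_lt_trans (Rmax_r (/ c) _) (Rlt_le_trans _ _ _ lt_z le_zN).
by move/forallP: (separating_gap_value hk (ltac:(lia) : 16 * k + 1700 <= N)); apply.
Qed.
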